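(* Let $T\in S(n,d)$ and let $\sigma\subseteq[n]$ be a simplex on $\gamma_d$. Then $\sigma\le_{d+1}T$ if and only if there are no $\sigma'\subseteq\sigma$ and $\tau\in T$ with $|\sigma'|=\lceil d/2\rceil+1$, $|\tau|=\lfloor d/2\rfloor+1$ and $\tau<_{d+1}\sigma'$. Similarly, $T\le_{d+1}\sigma$ if and only if there are no $\sigma'\subseteq\sigma$ and $\tau\in T$ with $|\tau|=\lceil d/2\rceil+1$, $|\sigma'|=\lfloor d/2\rfloor+1$ and $\sigma'<_{d+1}\tau$.
   Context: $\gamma_d=\{(t,t^2,\dots,t^d):t\in\mathbb{R}\}$. Fix $t_1<\dots<t_n$ and points $\gamma_d(t_i)$ identified with $i\in[n]$; $C(n,d)$ is their convex hull and $S(n,d)$ the set of triangulations of $C(n,d)$ with vertices in $[n]$. A simplex is a subset of size at most $d+1$, identified with its convex hull; simplices $\sigma,\tau$ overlap if $\mathrm{conv}(\sigma)\cap\mathrm{conv}(\tau)\supsetneq\mathrm{conv}(\sigma\cap\tau)$. The height function $h_\sigma:\mathrm{conv}(\sigma)\to\mathbb{R}$ gives the last coordinate of the point in the convex hull of the lifted points $\gamma_{d+1}(t_i)$, $i\in\sigma$, that projects to $p$. $\sigma<_{d+1}\tau$ means $\sigma,\tau$ overlap in $\mathbb{R}^d$ and $h_\sigma\le h_\tau$ on $\mathrm{conv}(\sigma)\cap\mathrm{conv}(\tau)$. For $T\in S(n,d)$, $h_T:C(n,d)\to\mathbb{R}$ is $h_T(p)=h_\tau(p)$ for $p\in\mathrm{conv}(\tau)$,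 $\tau\in T$. $\sigma\le_{d+1}T$ means $h_\sigma\le h_T$ on $\mathrm{conv}(\sigma)$, and $T\le_{d+1}\sigma$ means $h_T\le h_\sigma$ on $\mathrm{conv}(\sigma)$. *)

From mathcomp Require Import all_boot all_order all_algebra.
From mathcomp Require Import reals.
Unset Printing Implicit Defensive.
Import Order.TTheory GRing.Theory Num.Theory.
Local Open Scope ring_scope.

Section CyclicPolytope.
Variables (R : realType) (n : nat) (t : 'I_n -> R).

Definition gamma (d : nat) (x : R) : 'rV[R]_d := \row_(k < d) x ^+ k.+1.

Definition conv (d : nat) (A : {set 'I_n}) : 'rV[R]_d -> Prop :=
  fun p => exists lam : 'I_n -> R,
    [/\ forall i, 0 <= lam i,
        forall i, i \notin A -> lam i = 0,
        \sum_i lam i = 1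
      & p = \sum_i lam i *: gamma d (t i)].

(* sigma, tau overlap: conv(sigma) /\ conv(tau) strictly contains conv(sigma /\ tau) *)
Definition overlap (d : nat) (s u : {set 'I_n}) : Prop :=
  (forall p, conv d (s :&: u) p -> conv d s p /\ conv d u p) /\
  exists p, [/\ conv d s p, conv d u p & ~ conv d (s :&: u) p].

Definition proj (d : nat) (q : 'rV[R]_d.+1) : 'rV[R]_d :=
  \row_(k < d) q 0 (widen_ord (leqnSn d) k).
Definition lastc (d : nat) (q : 'rV[R]_d.+1) : R := q 0 ord_max.

(* h_sigma(p) = h : the point of conv of the lifted points gamma_{d+1}(t_i),
   i in sigma, projecting to p, has last coordinate h *)
Definition is_height (d : nat) (s : {set 'I_n}) (p : 'rV[R]_d) (h : R) : Prop :=
  exists q, [/\ conv d.+1 s q, proj d q = p & lastc d q = h].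

Definition lt_hd (d : nat) (s u : {set 'I_n}) : Prop :=
  overlap d s u /\
  forall p hs hu, is_height d s p hs -> is_height d u p hu -> hs <= hu.

(* S(n,d): triangulations of C(n,d), given by their d-simplices *)
Definition triangulation (d : nat) (T : {set {set 'I_n}}) : Prop :=
  [/\ forall s, s \in T -> #|s| = d.+1,
      forall p, conv d [set: 'I_n] p <-> exists2 s, s \in T & conv d s p
    & forall s u, s \in T -> u \in T -> ~ overlap d s u].

Definition in_triang (T : {set {set 'I_n}}) (u : {set 'I_n}) : Prop :=
  exists2 s, s \in T & u \subset s.

Definition le_sT (d : nat) (s : {set 'I_n}) (T : {set {set 'I_n}}) : Prop :=
  forall p hs u hu, u \in T -> is_height d s p hs -> is_height d u p hu -> hs <= hu.

Definition le_Ts (d : nat) (T : {set {set 'I_n}}) (s : {set 'I_n}) : Prop :=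
  forall p hs u hu, u \in T -> is_height d s p hs -> is_height d u p hu -> hu <= hs.

End CyclicPolytope.

Arguments gamma {R} d x.
Arguments conv {R n} t d A p.
Arguments overlap {R n} t d s u.
Arguments proj {R} d q.
Arguments lastc {R} d q.
Arguments is_height {R n} t d s p h.
Arguments lt_hd {R n} t d s u.
Arguments triangulation {R n} t d T.
Arguments in_triang {n} T u.
Arguments le_sT {R n} t d s T.
Arguments le_Ts {R n} t d T s.

From mathcomp Require Import all_boot all_order all_algebra.
From mathcomp Require Import reals.
Import Order.TTheory GRing.Theory Num.Theory.
Local Open Scope ring_scope.

(* Write a point p of conv(A) as sum_i lam_i gamma_d(t_i) with convex weights lam on A;
   then h_A(p) is the moment sum_i lam_i t_i^(d+1).  Two representations of the same
   point differ by a signed weight nu whose moments of order 0..d vanish, and the sign of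
   its moment of order d+1 compares the two heights.  Pairing nu with a polynomial of
   degree d+1 whose sign follows that of nu shows that nu changes sign at least d+1
   times, hence alternates on d+2 nodes.  Its positive and negative nodes form a circuit
   P, N of sizes ceil(d/2)+1 and floor(d/2)+1 with N <_{d+1} P: the weights
   1/prod_(j != i) (t_i - t_j) give a common point, and the node polynomial compares the
   heights.  Conversely such a circuit has a point where the heights differ, because
   weights on at most d+2 nodes are determined by their first d+2 moments. *)

Set Implicit Arguments.
Unset Strict Implicit.

Section MomentCurve.
Variables (R : realType) (n : nat) (t : 'I_n -> R).
Hypothesis t_incr : forall i j : 'I_n, (i < j)%N -> t i < t j.

Lemma t_inj : injective t.
Proof.
by move=> i j tij; apply: val_inj; case: (ltngtP i j) => // /t_incr; rewrite tij ltxx.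
Qed.

Lemma conv_subset d (A B : {set 'I_n}) p : A \subset B -> conv t d A p -> conv t d B p.
Proof.
move=> /subsetP AB [lam [lam_ge0 lam_out lam_sum ->]].
by exists lam; split=> // i iB; apply: lam_out; apply: contra iB; apply: AB.
Qed.

Lemma is_height_subset d (A B : {set 'I_n}) p h :
  A \subset B -> is_height t d A p h -> is_height t d B p h.
Proof. by move=> AB [q [Aq qp qh]]; exists q; split=> //; apply: conv_subset Aq. Qed.

Lemma conv_set0 d p : ~ conv t d set0 p.
Proof.
move=> [lam [_ lam_out lam_sum _]]; move: lam_sum; rewrite big1 => [/esym/eqP|i _].
  by rewrite oner_eq0.
by rewrite lam_out ?inE.
Qed.

Lemma overlap_disjoint d (A B : {set 'I_n}) : A :&: B = set0 ->
  (exists p, conv t d A p /\ conv t d B p) -> overlap t d A B.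
Proof.
move=> AB0 [p [Ap Bp]]; rewrite /overlap AB0.
by split=> [q /conv_set0 //|]; exists p; split=> // /conv_set0.
Qed.

Definition moment (nu : 'I_n -> R) (k : nat) : R := \sum_i nu i * t i ^+ k.

Lemma moment0 nu : moment nu 0 = \sum_i nu i.
Proof. by apply: eq_bigr => i _; rewrite mulr1. Qed.

Lemma momentB nu mu k : moment (nu \- mu) k = moment nu k - moment mu k.
Proof. by rewrite /moment -sumrB; apply: eq_bigr => i _; rewrite mulrBl. Qed.

Lemma moment_divr nu c k : moment (fun i => nu i / c) k = moment nu k / c.
Proof. by rewrite /moment mulr_suml; apply: eq_bigr => i _; rewrite mulrAC. Qed.

Lemma sum_gamma_entry d lam (k : 'I_d) :
  (\sum_i lam i *: gamma d (t i)) 0 k = moment lam k.+1.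
Proof. by rewrite summxE; apply: eq_bigr => i _; rewrite !mxE. Qed.

Definition weight_on (A : {set 'I_n}) (lam : 'I_n -> R) : Prop :=
  (forall i, 0 <= lam i) /\ (forall i, i \notin A -> lam i = 0).

Lemma is_heightP d A p h : is_height t d A p h <->
  exists lam, [/\ weight_on A lam, \sum_i lam i = 1,
                  p = \sum_i lam i *: gamma d (t i) & h = moment lam d.+1].
Proof.
split=> [[q [[lam [lam_ge0 lam_out lam_sum ->]] <- <-]]|].
  exists lam; split=> //; last by rewrite /lastc sum_gamma_entry.
  by apply/rowP => k; rewrite /proj mxE !sum_gamma_entry.
move=> [lam [[lam_ge0 lam_out] lam_sum -> ->]].
exists (\sum_i lam i *: gamma d.+1 (t i)); split; first by exists lam.
  by apply/rowP => k; rewrite /proj mxE !sum_gamma_entry.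
by rewrite /lastc sum_gamma_entry.
Qed.

Lemma moment_sub_eq0 d la mu : \sum_i la i = \sum_i mu i ->
  \sum_i la i *: gamma d (t i) = \sum_i mu i *: gamma d (t i) ->
  forall k, (k <= d)%N -> moment (la \- mu) k = 0.
Proof.
move=> eq_mass eq_point [_|k lt_kd]; first by rewrite momentB !moment0 eq_mass subrr.
by rewrite momentB -(sum_gamma_entry la (Ordinal lt_kd))
  -(sum_gamma_entry mu (Ordinal lt_kd)) eq_point subrr.
Qed.

Lemma is_height_sub_moment d A B p hA hB :
  is_height t d A p hA -> is_height t d B p hB ->
  exists la mu, [/\ weight_on A la, weight_on B mu,
    forall k, (k <= d)%N -> moment (la \- mu) k = 0
  & moment (la \- mu) d.+1 = hA - hB].
Proof.
move=> /is_heightP [la [wA la_sum pA ->]] /is_heightP [mu [wB mu_sum pB ->]].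
exists la, mu; split=> //; last exact: momentB.
by apply: moment_sub_eq0; rewrite ?la_sum ?mu_sum -?pA -?pB.
Qed.

Lemma conv_meet_of_moments d (A B : {set 'I_n}) c i0 :
  (forall i, 0 < c i -> i \in A) -> (forall i, c i < 0 -> i \in B) -> 0 < c i0 ->
  (forall k, (k <= d)%N -> moment c k = 0) ->
  exists p, conv t d A p /\ conv t d B p.
Proof.
move=> pos_A neg_B c_i0 mom_eq0.
pose la i := if 0 < c i then c i else 0.
pose mu i := if c i < 0 then - c i else 0.
have la_ge0 i : 0 <= la i by rewrite /la; case: ifP => // /ltW.
have mu_ge0 i : 0 <= mu i by rewrite /mu; case: ifP => // /ltW; rewrite oppr_ge0.
have c_split i : c i = la i - mu i.
  by rewrite /la /mu; case: (ltrgtP (c i) 0) => [_|_|->];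
    rewrite ?subr0 ?sub0r ?opprK ?subrr.
have eq_mom k : (k <= d)%N -> moment la k = moment mu k.
  move=> le_kd; apply/eqP; rewrite -subr_eq0 -momentB -(mom_eq0 _ le_kd).
  by apply/eqP; apply: eq_bigr => i _; rewrite c_split.
pose W := \sum_i la i.
have W_gt0 : 0 < W.
  rewrite /W (bigD1 i0) //= ltr_wpDr ?sumr_ge0 //.
  by rewrite /la c_i0.
have mu_mass : \sum_i mu i = W by rewrite /W -!moment0 eq_mom.
exists (\sum_i (la i / W) *: gamma d (t i)); split.
  exists (fun i => la i / W); split=> //.
  - by move=> i; rewrite divr_ge0 ?la_ge0 ?mu_ge0 ?ltW.
  - move=> i iA; rewrite /la; case: ifP => [/pos_A|_]; last by rewrite mul0r.
    by rewrite (negPf iA).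
  - by rewrite -mulr_suml divff ?gt_eqF.
exists (fun i => mu i / W); split.
- by move=> i; rewrite divr_ge0 ?la_ge0 ?mu_ge0 ?ltW.
- move=> i iB; rewrite /mu; case: ifP => [/neg_B|_]; last by rewrite mul0r.
  by rewrite (negPf iB).
- by rewrite -mulr_suml mu_mass divff ?gt_eqF.
- by apply/rowP => k; rewrite !sum_gamma_entry !moment_divr eq_mom.
Qed.

Lemma sum_mul_horner nu (Q : {poly R}) :
  \sum_i nu i * Q.[t i] = \sum_(k < size Q) Q`_k * moment nu k.
Proof.
under eq_bigr do rewrite horner_coef big_distrr.
rewrite exchange_big; apply: eq_bigr => k _ /=; rewrite /moment big_distrr.
by apply: eq_bigr => i _; rewrite mulrCA.
Qed.

Lemma sum_mul_horner_eq0 K nu (Q : {poly R}) :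
  (forall k, (k < K)%N -> moment nu k = 0) -> (size Q <= K)%N -> \sum_i nu i * Q.[t i] = 0.
Proof.
move=> mom_eq0 szQ; rewrite sum_mul_horner big1 // => k _.
by rewrite mom_eq0 ?mulr0 // (leq_trans _ szQ).
Qed.

Lemma sum_mul_horner_monic d nu (Q : {poly R}) :
  (forall k, (k <= d)%N -> moment nu k = 0) -> Q \is monic -> size Q = d.+2 -> \sum_i nu i * Q.[t i] = moment nu d.+1.
Proof.
move=> mom_eq0 /monicP lcQ szQ.
rewrite sum_mul_horner szQ big_ord_recr /= big1 ?add0r => [|k _]; last first.
  by rewrite mom_eq0 ?mulr0 // -ltnS ltn_ord.
by rewrite -[d.+1]/(d.+2).-1 -szQ -lead_coefE lcQ mul1r.
Qed.

Lemma horner_prod_XsubC (I : Type) (r : seq I) (F : I -> R) y :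
  (\prod_(i <- r) ('X - (F i)%:P)).[y] = \prod_(i <- r) (y - F i).
Proof. by rewrite horner_prod; apply: eq_bigr => i _; rewrite hornerXsubC. Qed.

Lemma moment_eq0_supported (A : {set 'I_n}) nu : (forall i, i \notin A -> nu i = 0) ->
  (forall k, (k < #|A|)%N -> moment nu k = 0) -> forall i, nu i = 0.
Proof.
move=> nu_out mom_eq0 i; have [iA|/nu_out //] := boolP (i \in A).
pose Q := \prod_(j <- enum (A :\ i)) ('X - (t j)%:P).
have szQ : size Q = #|A| by rewrite size_prod_XsubC -cardE (cardsD1 i A) iA.
have Qi : Q.[t i] != 0.
  rewrite horner_prod_XsubC prodf_seq_neq0; apply/allP => j.
  by rewrite mem_enum in_setD1 => /andP[ji _]; rewrite subr_eq0 (inj_eq t_inj) eq_sym.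
have Qj j : j != i -> nu j * Q.[t j] = 0.
  move=> ji; have [jA|/nu_out ->] := boolP (j \in A); last by rewrite mul0r.
  by rewrite horner_prod_XsubC (big_rem j) ?mem_enum ?in_setD1 ?ji //= subrr mul0r mulr0.
have := sum_mul_horner_eq0 mom_eq0 (eq_leq szQ).
by rewrite (bigD1 i) //= big1 ?addr0 // => /eqP; rewrite mulf_eq0 (negPf Qi) orbF => /eqP.
Qed.

Definition lagrange_denom (s : seq 'I_n) (i : 'I_n) : R := \prod_(j <- rem i s) (t i - t j).

Lemma lagrange_denom_neq0 s i : uniq s -> lagrange_denom s i != 0.
Proof.
move=> s_uniq; rewrite prodf_seq_neq0; apply/allP => j.
by rewrite mem_rem_uniq // inE => /andP[ji _]; rewrite subr_eq0 (inj_eq t_inj) eq_sym.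
Qed.

Lemma sum_pow_div_lagrange_denom s k : uniq s -> (k.+1 < size s)%N ->
  \sum_(i <- s) t i ^+ k / lagrange_denom s i = 0.
Proof.
move=> s_uniq lt_ks.
pose L i := \prod_(j <- rem i s) ('X - (t j)%:P).
pose I := \sum_(i <- s) (t i ^+ k / lagrange_denom s i) *: L i.
have szL i : i \in s -> size (L i) = size s.
  by move=> si; rewrite size_prod_XsubC size_rem // prednK // (ltn_trans _ lt_ks).
have I_at l : l \in s -> I.[t l] = t l ^+ k.
  move=> sl; rewrite horner_sum (big_rem l) //= big1_seq ?addr0 => [|i /andP[_ si]].
    by rewrite hornerZ horner_prod_XsubC mulfVK ?lagrange_denom_neq0.
  move: si; rewrite mem_rem_uniq // inE => /andP[il _].
  rewrite hornerZ horner_prod_XsubC (big_rem l) /= ?subrr ?mul0r ?mulr0 //.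
  by rewrite mem_rem_uniq // inE eq_sym il.
have I_Xk : I = 'X^k.
  apply/eqP; rewrite -subr_eq0; apply/eqP/(roots_geq_poly_eq0 (rs := map t s)).
  - by apply/allP => _ /mapP[l sl ->]; rewrite rootE hornerD hornerN I_at // hornerXn subrr.
  - by rewrite map_inj_uniq //; apply: t_inj.
  - rewrite size_map; apply: leq_trans (size_polyD _ _) _.
    rewrite geq_max size_polyN size_polyXn (ltnW lt_ks) andbT /I big_seq.
    elim/big_ind: _ => [|p q|i si]; first by rewrite size_poly0.
      by move=> szp szq; apply: leq_trans (size_polyD _ _) _; rewrite geq_max szp.
    by apply: leq_trans (size_scale_leq _ _) _; rewrite szL.
have lt_k_top : (k < (size s).-1)%N by rewrite ltn_predRL.
have := congr1 (fun p : {poly R} => p`_(size s).-1) I_Xk.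
rewrite coef_sum coefXn (gtn_eqF lt_k_top) mulr0n => {2}<-.
apply: eq_big_seq => i si; rewrite coefZ -(szL i si) -lead_coefE.
by rewrite (monicP (monic_prod_XsubC _ _ _)) mulr1.
Qed.

Definition signed (b : bool) (x : R) : R := if b then x else - x.

Lemma signedN b x : signed (~~ b) x = - signed b x.
Proof. by case: b; rewrite /= ?opprK. Qed.

Fixpoint alternating (nu : 'I_n -> R) (b : bool) (m : nat) (s : seq 'I_n) : Prop :=
  if s is i :: s' then [/\ (i < m)%N, 0 < signed b (nu i) & alternating nu (~~ b) i s']
  else True.

Lemma alternating_lt nu b m s : alternating nu b m s -> forall i, i \in s -> (i < m)%N.
Proof.
elim: s b m => [//|g s IHs] b m /= [lt_gm _ alt_s] i.
by rewrite inE => /predU1P[-> //|si]; apply: ltn_trans (IHs _ _ alt_s i si) lt_gm.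
Qed.

Lemma alternating_uniq nu b m s : alternating nu b m s -> uniq s.
Proof.
elim: s b m => [//|g s IHs] b m /= [_ _ alt_s]; rewrite (IHs _ _ alt_s) andbT.
by apply/negP => /(alternating_lt alt_s); rewrite ltnn.
Qed.

Lemma alternating_count nu b m s : alternating nu b m s ->
  count (fun i => 0 < nu i) s = (if b then uphalf (size s) else (size s)./2) /\
  count (fun i => nu i < 0) s = (if b then (size s)./2 else uphalf (size s)).
Proof.
elim: s b m => [|g s IHs] b m /=; first by case: b.
move=> [_ g_pos /IHs [-> ->]]; rewrite uphalfE.
by case: b g_pos => /= [|/[!oppr_gt0]] g_sign; rewrite g_sign (lt_gtF g_sign).
Qed.

Lemma last_signed_pos nu b m :
  (forall i : 'I_n, (i < m)%N -> signed b (nu i) <= 0) \/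
  exists g : 'I_n, [/\ (g < m)%N, 0 < signed b (nu g) &
    forall i : 'I_n, (g < i < m)%N -> signed b (nu i) <= 0].
Proof.
pose pos (i : 'I_n) := (i < m)%N && (0 < signed b (nu i)).
have [g0 pos_g0|no_pos] := pickP pos; last first.
  by left=> i lt_im; rewrite leNgt; apply: contraFN (no_pos i) => i_pos; apply/andP.
right; case: (arg_maxnP val pos_g0) => g /andP[lt_gm g_pos] g_max.
exists g; split=> // i /andP[lt_gi lt_im]; rewrite leNgt; apply/negP => i_pos.
have /= := g_max i; rewrite /pos lt_im i_pos => /(_ isT).
by rewrite leqNgt lt_gi.
Qed.

(* Scanning from the right, each new root [t g] is put at the last index where [nu]
   still has the expected sign, so the product changes sign together with [nu]. *)
Lemma alternating_or_sign_product nu k : forall m b,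
  (exists2 s, alternating nu b m s & size s = k) \/
  exists2 rs : seq R, (size rs < k)%N &
    (forall i : 'I_n, (i < m)%N -> signed b (nu i) * \prod_(r <- rs) (t i - r) <= 0) /\
    (forall i : 'I_n, (m <= i)%N -> 0 <= \prod_(r <- rs) (t i - r)).
Proof.
elim: k => [|k IHk] m b; first by left; exists [::].
have [nonpos|[g [lt_gm g_pos g_last]]] := last_signed_pos nu b m.
  by right; exists [::] => //; split=> i *; rewrite big_nil ?mulr1 ?nonpos.
have [[s alt_s <-]|[rs lt_rsk [below above]]] := IHk g (~~ b).
  by left; exists (g :: s).
right; exists (t g :: rs) => //; split=> i; rewrite big_cons.
  move=> lt_im; case: (ltngtP i g) => [lt_ig|lt_gi|/val_inj ->]; last first.
  - by rewrite subrr mul0r mulr0.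
  - rewrite mulrA; apply: mulr_le0_ge0 (above _ (ltnW lt_gi)).
    apply: mulr_le0_ge0; first by apply: g_last; rewrite lt_gi.
    by rewrite subr_ge0 ltW ?t_incr.
  - have := below i lt_ig; rewrite signedN mulNr oppr_le0 => prod_ge0.
    by rewrite mulrCA; apply: mulr_le0_ge0 prod_ge0; rewrite subr_le0 ltW ?t_incr.
move=> le_mi; have lt_gi := leq_trans lt_gm le_mi.
by apply: mulr_ge0 (above _ (ltnW lt_gi)); rewrite subr_ge0 ltW ?t_incr.
Qed.

Lemma alternating_of_moments d nu :
  (forall k, (k <= d)%N -> moment nu k = 0) -> 0 < moment nu d.+1 ->
  exists2 s, alternating nu true n s & size s = d.+2.
Proof.
move=> mom_eq0 mom_gt0.
have [//|[rs lt_rs [below _]]] := alternating_or_sign_product nu d.+2 n true.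
have [a le_at] : exists a, forall i, a <= t i.
  exists (- \sum_i `|t i|) => i; rewrite lerNl.
  apply: le_trans (ler_norm (- t i)) _.
  by rewrite normrN (bigD1 i) //= lerDl sumr_ge0.
pose Q := \prod_(r <- rs ++ nseq (d.+1 - size rs) a) ('X - r%:P).
have szQ : size Q = d.+2 by rewrite size_prod_XsubC size_cat size_nseq subnKC.
suff : \sum_i nu i * Q.[t i] <= 0.
  by rewrite (sum_mul_horner_monic mom_eq0 (monic_prod_XsubC _ _ _) szQ) leNgt mom_gt0.
apply: sumr_le0 => i _; rewrite horner_prod_XsubC big_cat mulrA /=.
apply: mulr_le0_ge0; first exact: below.
rewrite big_seq prodr_ge0 // => r.
by rewrite mem_nseq => /andP[_ /eqP ->]; rewrite subr_ge0.
Qed.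

Lemma alternating_lagrange_denom nu b m s : alternating nu b m s ->
  forall i, i \in s -> 0 < signed b (nu i) * lagrange_denom s i.
Proof.
elim: s b m => [//|g s IHs] b m /= [_ g_pos alt_s] i.
rewrite /lagrange_denom /= inE eq_sym; case: (eqVneq g i) => [<- _|gi /= si].
  rewrite mulr_gt0 // big_seq prodr_gt0 // => j sj.
  by rewrite subr_gt0 t_incr // (alternating_lt alt_s).
have := IHs _ _ alt_s i si; rewrite signedN mulNr oppr_gt0 big_cons => neg.
by rewrite mulrCA nmulr_rgt0 // subr_lt0 t_incr // (alternating_lt alt_s).
Qed.

Section Circuit.
Variables (d : nat) (nu : 'I_n -> R) (m : 'I_n) (s : seq 'I_n).
Hypotheses (alt : alternating nu true n (m :: s)) (size_s : size s = d.+1).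
Let P := [set i in m :: s | 0 < nu i].
Let N := [set i in m :: s | nu i < 0].

Lemma circuit_card : #|P| = (uphalf d).+1 /\ #|N| = (d./2).+1.
Proof.
have card_sep (p : pred 'I_n) : #|[set i in m :: s | p i]| = count p (m :: s).
  rewrite -size_filter -(card_uniqP (filter_uniq p (alternating_uniq alt))).
  by apply: eq_card => i; rewrite in_set mem_filter andbC.
have [pos neg] := alternating_count alt.
by rewrite !card_sep pos neg /= size_s !uphalfE.
Qed.

Lemma circuit_heights_le p hN hP :
  is_height t d N p hN -> is_height t d P p hP -> hN <= hP.
Proof.
move=> HN HP; rewrite -subr_ge0.
have [la [mu [[la_ge0 la_out] [_ mu_out] mom_eq0 <-]]] := is_height_sub_moment HP HN.
rewrite -(sum_mul_horner_monic mom_eq0 (monic_prod_XsubC s xpredT t)); last first.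
  by rewrite size_prod_XsubC size_s.
have m_notN : m \notin N by rewrite inE negb_and ltNge ltW ?orbT //; case: alt.
rewrite (bigD1 m) //= [X in _ + X]big1 ?addr0 => [|i im].
  rewrite mu_out // subr0 horner_prod_XsubC mulr_ge0 // big_seq prodr_ge0 // => j sj.
  by rewrite subr_ge0 ltW // t_incr //; case: alt => _ _ /alternating_lt; apply.
have [si|si] := boolP (i \in s).
  by rewrite horner_prod_XsubC (big_rem i) //= subrr mul0r mulr0.
have i_out : i \notin m :: s by rewrite inE negb_or im.
by rewrite /= la_out ?mu_out ?subrr ?mul0r // inE negb_and i_out.
Qed.

Lemma circuit_meet : exists p, conv t d N p /\ conv t d P p.
Proof.
suff [p [Pp Np]] : exists p, conv t d P p /\ conv t d N p by exists p.
pose c i := if i \in m :: s then (lagrange_denom (m :: s) i)^-1 else 0.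
have sign_c i : i \in m :: s -> 0 < nu i * lagrange_denom (m :: s) i.
  exact: alternating_lagrange_denom alt i.
have c_pos i : 0 < c i -> i \in P.
  rewrite /c; case: ifP => [ms|_]; last by rewrite ltxx.
  by rewrite invr_gt0 inE ms /= => D_pos; rewrite -(pmulr_lgt0 _ D_pos) sign_c.
have c_neg i : c i < 0 -> i \in N.
  rewrite /c; case: ifP => [ms|_]; last by rewrite ltxx.
  by rewrite invr_lt0 inE ms /= => D_neg; rewrite -(nmulr_lgt0 _ D_neg) sign_c.
apply: (@conv_meet_of_moments d P N c m c_pos c_neg).
  have := sign_c m (mem_head _ _); rewrite /c mem_head invr_gt0.
  by rewrite pmulr_rgt0 //; case: alt.
move=> k le_kd; rewrite /moment (eq_bigr (fun i =>
  if i \in m :: s then t i ^+ k / lagrange_denom (m :: s) i else 0)); last first.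
  by move=> i _; rewrite /c; case: ifP; rewrite ?mul0r // mulrC.
rewrite -big_mkcond -big_uniq ?(alternating_uniq alt) //.
by rewrite sum_pow_div_lagrange_denom ?(alternating_uniq alt) //= size_s !ltnS.
Qed.

Lemma circuit_lt_hd : lt_hd t d N P.
Proof.
split; last exact: circuit_heights_le.
apply: overlap_disjoint circuit_meet; apply/setP => i.
by rewrite !inE; case: ltrgtP; rewrite ?andbF.
Qed.

End Circuit.

Lemma circuit_of_moments d (A B : {set 'I_n}) nu :
  (forall i, 0 < nu i -> i \in A) -> (forall i, nu i < 0 -> i \in B) ->
  (forall k, (k <= d)%N -> moment nu k = 0) -> 0 < moment nu d.+1 ->
  exists P N : {set 'I_n}, [/\ P \subset A, N \subset B, #|P| = (uphalf d).+1,
    #|N| = (d./2).+1 & lt_hd t d N P].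
Proof.
move=> pos_A neg_B mom_eq0 mom_gt0.
have [[//|m s] alt [size_s]] := alternating_of_moments mom_eq0 mom_gt0.
have [card_P card_N] := circuit_card alt size_s.
exists [set i in m :: s | 0 < nu i], [set i in m :: s | nu i < 0]; split=> //.
- by apply/subsetP => i; rewrite inE => /andP[_ /pos_A].
- by apply/subsetP => i; rewrite inE => /andP[_ /neg_B].
- exact: circuit_lt_hd.
Qed.

Lemma circuit_of_heights_gt d (A B : {set 'I_n}) p hA hB :
  is_height t d A p hA -> is_height t d B p hB -> hB < hA ->
  exists P N : {set 'I_n}, [/\ P \subset A, N \subset B, #|P| = (uphalf d).+1,
    #|N| = (d./2).+1 & lt_hd t d N P].
Proof.
move=> HA HB; rewrite -subr_gt0.
have [la [mu [[la_ge0 la_out] [mu_ge0 mu_out] mom_eq0 <-]]] := is_height_sub_moment HA HB.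
apply: circuit_of_moments mom_eq0 => i; apply: contraTT => /=.
  by move/la_out ->; rewrite sub0r oppr_gt0 -leNgt.
by move/mu_out ->; rewrite subr0 -leNgt.
Qed.

Lemma lt_hd_strict d (N P : {set 'I_n}) : lt_hd t d N P -> (#|N| + #|P| <= d.+2)%N ->
  exists p hN hP, [/\ is_height t d N p hN, is_height t d P p hP & hN < hP].
Proof.
move=> [[_ [p [[al [al_ge0 al_out al_sum eq_al]] [be [be_ge0 be_out be_sum eq_be]] not_NP]]]
  le_heights] card_NP.
have HN : is_height t d N p (moment al d.+1) by apply/is_heightP; exists al.
have HP : is_height t d P p (moment be d.+1) by apply/is_heightP; exists be.
exists p, (moment al d.+1), (moment be d.+1); split=> //.
rewrite lt_neqAle (le_heights _ _ _ HN HP) andbT; apply/eqP => eq_top; apply: not_NP.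
have mom_eq0 : forall k, (k < #|N :|: P|)%N -> moment (be \- al) k = 0.
  move=> k /leq_trans /(_ (leq_trans (leq_card_setU _ _) card_NP)); rewrite ltnS leq_eqVlt.
  case/predU1P=> [->|]; first by rewrite momentB eq_top subrr.
  by rewrite ltnS; apply: moment_sub_eq0; rewrite ?be_sum ?al_sum -?eq_al -?eq_be.
have be_al_eq0 : forall i, (be \- al) i = 0.
  apply: moment_eq0_supported mom_eq0 => i; rewrite inE negb_or.
  by case/andP=> /al_out al0 /be_out be0; rewrite /= al0 be0 subrr.
exists al; split=> // i; rewrite inE negb_and => /orP[/al_out //|/be_out be0].
by have /= := be_al_eq0 i; rewrite be0 sub0r => /eqP; rewrite oppr_eq0 => /eqP.
Qed.

Lemma heights_le_iff d (A B : {set 'I_n}) :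
  (forall p hA hB, is_height t d A p hA -> is_height t d B p hB -> hA <= hB) <->
  ~ exists P N : {set 'I_n}, [/\ P \subset A, N \subset B, #|P| = (uphalf d).+1,
      #|N| = (d./2).+1 & lt_hd t d N P].
Proof.
split=> [le_AB [P [N [PA NB card_P card_N lt_NP]]]|no_circuit p hA hB HA HB].
  have [|p [hN [hP [HN HP lt_NP_p]]]] := lt_hd_strict lt_NP.
    by rewrite card_P card_N addSn addnS uphalf_half addnCA addnn odd_double_half.
  have := le_AB p _ _ (is_height_subset PA HP) (is_height_subset NB HN).
  by rewrite leNgt lt_NP_p.
by rewrite leNgt; apply/negP => /(circuit_of_heights_gt HA HB).
Qed.

End MomentCurve.

Theorem lemma2p10 (R : realType) (n d : nat) (t : 'I_n -> R)
  (t_incr : forall i j : 'I_n, (i < j)%N -> t i < t j)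
  (T : {set {set 'I_n}}) (hT : triangulation t d T)
  (s : {set 'I_n}) (hs : (#|s| <= d.+1)%N) :
  (le_sT t d s T <->
     ~ exists (s' u : {set 'I_n}), [/\ s' \subset s, in_triang T u,
                       #|s'| = (uphalf d).+1, #|u| = (d./2).+1
                     & lt_hd t d u s'])
  /\
  (le_Ts t d T s <->
     ~ exists (s' u : {set 'I_n}), [/\ s' \subset s, in_triang T u,
                       #|u| = (uphalf d).+1, #|s'| = (d./2).+1
                     & lt_hd t d s' u]).
Proof.
split; split.
- move=> le_sT [s' [u [ss' [v vT uv] card_s' card_u lt_us']]].
  apply: (heights_le_iff t_incr d s v).1 (fun p hS hV => le_sT p hS v hV vT) _.
  by exists s', u.
- move=> no_circuit p hS u hU uT; apply: (heights_le_iff t_incr d s u).2.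
  move=> [P [N [Ps Nu card_P card_N lt_NP]]]; apply: no_circuit.
  by exists P, N; split=> //; exists u.
- move=> le_Ts [s' [u [ss' [v vT uv] card_u card_s' lt_s'u]]].
  apply: (heights_le_iff t_incr d v s).1 (fun p hV hS HV HS => le_Ts p hS v hV vT HS HV) _.
  by exists u, s'.
- move=> no_circuit p hS u hU uT HS HU; apply: (heights_le_iff t_incr d u s).2 HU HS.
  move=> [P [N [Pu Ns card_P card_N lt_NP]]]; apply: no_circuit.
  by exists N, P; split=> //; exists u.
Qed.
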